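(* Let $n\ge 2$. The subgroup of $(n-2)$-decomposable braids in $P_n$, namely $\bigcap_{S\subseteq N,\ |S|=n-2} Q_S$, equals the commutator subgroup $[P_n,P_n]$ of $P_n$.
   Context: $P_n$ denotes the pure braid group on $n$ strands, generated by elements $p_{a,b}$ for $1\le a<b\le n$ subject to the relations: (A) $p_{a,b}p_{a,c}p_{b,c}=p_{a,c}p_{b,c}p_{a,b}=p_{b,c}p_{a,b}p_{a,c}$ for $1\le a<b<c\le n$; (B) $p_{a,b}p_{c,d}=p_{c,d}p_{a,b}$ and $p_{a,d}p_{b,c}=p_{b,c}p_{a,d}$ for $1\le a<b<c<d\le n$; (C) $p_{a,c}p_{b,c}^{-1}p_{b,d}p_{b,c}=p_{b,c}^{-1}p_{b,d}p_{b,c}p_{a,c}$ for $1\le a<b<c<d\le n$. Let $N=\{1,\dots,n\}$. For $S\subseteq N$, $Q_S$ is the subgroup generated by the $p_{a,b}$ with $a\in S$ or $b\in S$ (with $Q_\emptyset$ trivial). A braid is $k$-decomposable if it lies in $Q_S$ for every $S\subseteq N$ with $|S|=k$. *)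

From mathcomp Require Import all_boot.
Set Implicit Arguments. Unset Strict Implicit. Unset Printing Implicit Defensive.

(* Strands are labelled by 'I_n = {0,...,n-1} (shift of {1,...,n}).
   A letter (a, b, e) stands for p_{a,b} if e = false and p_{a,b}^-1 if e = true. *)
Definition letter (n : nat) := ('I_n * 'I_n * bool)%type.
Definition word (n : nat) := seq (letter n).

Definition linv n (x : letter n) : letter n := (x.1.1, x.1.2, ~~ x.2).
Definition winv n (w : word n) : word n := rev (map (@linv n) w).

Definition pg n (a b : 'I_n) : letter n := (a, b, false).
Definition pgi n (a b : 'I_n) : letter n := (a, b, true).

Definition valid_letter n (x : letter n) : bool := x.1.1 < x.1.2.
Definition valid_word n (w : word n) : bool := all (@valid_letter n) w.

(* The congruence on words generated by free cancellation and the
   defining relations (A), (B), (C) of P_n. *)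
Inductive peq (n : nat) : word n -> word n -> Prop :=
| peq_refl w : peq w w
| peq_sym u v : peq u v -> peq v u
| peq_trans u v w : peq u v -> peq v w -> peq u w
| peq_cat u1 u2 v1 v2 : peq u1 u2 -> peq v1 v2 -> peq (u1 ++ v1) (u2 ++ v2)
| peq_cancel x : peq [:: x; linv x] [::]
| peq_A1 (a b c : 'I_n) : a < b -> b < c ->
    peq [:: pg a b; pg a c; pg b c] [:: pg a c; pg b c; pg a b]
| peq_A2 (a b c : 'I_n) : a < b -> b < c ->
    peq [:: pg a c; pg b c; pg a b] [:: pg b c; pg a b; pg a c]
| peq_B1 (a b c d : 'I_n) : a < b -> b < c -> c < d ->
    peq [:: pg a b; pg c d] [:: pg c d; pg a b]
| peq_B2 (a b c d : 'I_n) : a < b -> b < c -> c < d ->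
    peq [:: pg a d; pg b c] [:: pg b c; pg a d]
| peq_C (a b c d : 'I_n) : a < b -> b < c -> c < d ->
    peq [:: pg a c; pgi b c; pg b d; pg b c] [:: pgi b c; pg b d; pg b c; pg a c].

Definition inQ n (S : {set 'I_n}) (w : word n) : Prop :=
  exists w' : word n,
    all (fun x => valid_letter x && ((x.1.1 \in S) || (x.1.2 \in S))) w' /\ peq w w'.

Definition commw n (uv : word n * word n) : word n :=
  uv.1 ++ uv.2 ++ winv uv.1 ++ winv uv.2.

(* membership in [P_n, P_n]: w equals a product of commutators [u,v]
   (the inverse of [u,v] is literally the word [v,u], so these products
   form the subgroup generated by commutators) *)
Definition inComm n (w : word n) : Prop :=
  exists s : seq (word n * word n),
    all (fun uv => valid_word uv.1 && valid_word uv.2) s /\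
    peq w (flatten (map (@commw n) s)).

Definition decomposable n (k : nat) (w : word n) : Prop :=
  forall S : {set 'I_n}, #|S| = k -> inQ S w.

From mathcomp Require Import all_boot all_algebra zify.
Set Implicit Arguments. Unset Strict Implicit. Unset Printing Implicit Defensive.
Import GRing.Theory.

(* Fix i < j and let Q be the subgroup generated by all p_{a,b} other than
   p_{i,j}; the Q_S with |S| = n - 2 are exactly these groups.  Relations (A),
   (B), (C) show, by a case analysis on the relative position of the strands,
   that conjugating a generator of Q by p_{i,j}^{+-1} stays in Q.  So Q is
   normal and P_n / Q is cyclic, generated by the image of p_{i,j}; hence Q
   contains all commutators.  Conversely the exponent sum of each generator is
   invariant under the relations, and it vanishes on Q for the generator
   p_{i,j}; so an (n-2)-decomposable braid has all exponent sums zero, and such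
   a word x u x^-1 v equals [x, u] (u v), which gives a product of commutators
   by induction on its length. *)

Section FreeCancellation.
Variable n : nat.
Implicit Types (s t u v w : word n) (x z : letter n).

Lemma linvK : cancel (@linv n) (@linv n).
Proof. by case=> [[a b] e]; rewrite /linv /= negbK. Qed.

Lemma winv_cons x u : winv (x :: u) = winv u ++ [:: linv x].
Proof. by rewrite /winv /= rev_cons -cats1. Qed.

Lemma winvK : involutive (@winv n).
Proof. by move=> u; rewrite /winv map_rev revK -map_comp (eq_map linvK) map_id. Qed.

Lemma peq_catl s u v : peq u v -> peq (s ++ u) (s ++ v).
Proof. by move=> h; apply: peq_cat => //; apply: peq_refl. Qed.

Lemma peq_catr t u v : peq u v -> peq (u ++ t) (v ++ t).
Proof. by move=> h; apply: peq_cat => //; apply: peq_refl. Qed.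

Lemma peq_cat_winv u : peq (u ++ winv u) [::].
Proof.
elim: u => [|x u IH] /=; first exact: peq_refl.
rewrite winv_cons (catA u) -cat1s.
apply: peq_trans (peq_catl _ (peq_catr _ IH)) _.
exact: peq_cancel.
Qed.

Lemma peq_winv_cat u : peq (winv u ++ u) [::].
Proof. by have := peq_cat_winv (winv u); rewrite winvK. Qed.

Lemma peq_winv u v : peq u v -> peq (winv u) (winv v).
Proof.
move=> h; apply: (@peq_trans _ _ (winv u ++ v ++ winv v)).
  by rewrite -{1}(cats0 (winv u)); apply/peq_catl/peq_sym/peq_cat_winv.
rewrite catA -{2}(cat0s (winv v)); apply: peq_catr.
apply: peq_trans (peq_catl _ (peq_sym h)) _; exact: peq_winv_cat.
Qed.

Lemma peq_cancel_in s t u : peq (s ++ u ++ winv u ++ t) (s ++ t).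
Proof. by apply: peq_catl; rewrite catA -{2}(cat0s t); apply/peq_catr/peq_cat_winv. Qed.

Lemma peq_cancelV_in s t u : peq (s ++ winv u ++ u ++ t) (s ++ t).
Proof. by have := peq_cancel_in s t (winv u); rewrite winvK. Qed.

Lemma peq_rewrite_at k m w v :
  peq (take m (drop k w)) v -> peq w (take k w ++ v ++ drop (k + m) w).
Proof.
move=> h; rewrite -{1}(cat_take_drop k w) -{1}(cat_take_drop m (drop k w)).
by rewrite drop_drop addnC; apply/peq_catl/peq_catr.
Qed.

Lemma peq_insert_at k w x : peq w (take k w ++ [:: x; linv x] ++ drop k w).
Proof.
rewrite -{1}(cat_take_drop k w) -{1}(cat0s (drop k w)).
by apply/peq_catl/peq_catr/peq_sym/peq_cancel.
Qed.

Lemma commw_cons_l x u v :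
  peq (commw (x :: u, v)) ((x :: commw (u, v) ++ [:: linv x]) ++ commw ([:: x], v)).
Proof.
apply: peq_sym; rewrite /commw /= winv_cons -?catA /=.
have := peq_cancelV_in (x :: u ++ v ++ winv u ++ winv v) (v ++ linv x :: winv v) [:: x].
rewrite /= -?catA /= => h; apply: peq_trans h _.
have := peq_cancelV_in (x :: u ++ v ++ winv u) (linv x :: winv v) v.
by rewrite /= -?catA; apply.
Qed.

Lemma commw_cons_r x y v :
  peq (commw ([:: x], y :: v))
      ([:: x; y; linv x; linv y] ++ (y :: commw ([:: x], v) ++ [:: linv y])).
Proof.
apply: peq_sym; rewrite /commw /= winv_cons -?catA /=.
have := peq_cancelV_in [:: x; y; linv x] (x :: v ++ linv x :: winv v ++ [:: linv y]) [:: y].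
move=> /= h; apply: peq_trans h _.
by have := peq_cancelV_in [:: x; y] (v ++ linv x :: winv v ++ [:: linv y]) [:: x].
Qed.

End FreeCancellation.

(* [rewrite_at k m H] rewrites the [m] letters of the left-hand word starting
   at position [k] by [H]; [insert_at k x] inserts [x x^-1] at position [k];
   [cancel_at k] deletes the cancelling pair at position [k]. *)
Ltac rewrite_at k m H :=
  eapply peq_trans; [apply: (@peq_rewrite_at _ k m); exact H | rewrite /=].
Ltac insert_at k x :=
  eapply peq_trans; [apply: (@peq_insert_at _ k _ x) | rewrite /=].
Ltac cancel_at k :=
  eapply peq_trans; [apply: (@peq_rewrite_at _ k 2); apply: peq_cancel | rewrite /=].

Section CyclicRelations.
Variable n : nat.

Definition cyclic3 (x y z : letter n) :=
  peq [:: x; y; z] [:: y; z; x] /\ peq [:: y; z; x] [:: z; x; y].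

Lemma cyclic3_rot x y z : cyclic3 x y z -> cyclic3 y z x.
Proof. by case=> R1 R2; split; [exact: R2 | exact/peq_sym/(peq_trans R1 R2)]. Qed.

Lemma cyclic3_A (a b c : 'I_n) : a < b -> b < c -> cyclic3 (pg a b) (pg a c) (pg b c).
Proof. by move=> hab hbc; split; [exact: peq_A1 | exact: peq_A2]. Qed.

Lemma cyclic3_conj (a1 b1 a2 b2 a3 b3 : 'I_n) :
  cyclic3 (pg a1 b1) (pg a2 b2) (pg a3 b3) ->
  [/\ peq [:: pg a1 b1; pg a2 b2; pgi a1 b1] [:: pgi a3 b3; pg a2 b2; pg a3 b3],
      peq [:: pg a1 b1; pg a3 b3; pgi a1 b1]
          [:: pgi a3 b3; pgi a2 b2; pg a3 b3; pg a2 b2; pg a3 b3],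
      peq [:: pgi a1 b1; pg a2 b2; pg a1 b1]
          [:: pg a2 b2; pg a3 b3; pg a2 b2; pgi a3 b3; pgi a2 b2] &
      peq [:: pgi a1 b1; pg a3 b3; pg a1 b1] [:: pg a2 b2; pg a3 b3; pgi a2 b2]].
Proof.
case=> R1 R2; have R3 := peq_trans R1 R2.
have I1 : peq [:: pg a1 b1; pg a2 b2; pgi a1 b1] [:: pgi a3 b3; pg a2 b2; pg a3 b3].
  insert_at 0 (pgi a3 b3). rewrite_at 1 3 (peq_sym R2). cancel_at 3. exact: peq_refl.
have I4 : peq [:: pgi a1 b1; pg a3 b3; pg a1 b1] [:: pg a2 b2; pg a3 b3; pgi a2 b2].
  insert_at 3 (pg a2 b2). rewrite_at 1 3 (peq_sym R3). cancel_at 0. exact: peq_refl.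
split => //.
- insert_at 1 (pgi a2 b2). insert_at 2 (pgi a1 b1). rewrite_at 3 3 R1. cancel_at 5.
  rewrite_at 0 3 (peq_winv I1). exact: peq_refl.
- insert_at 2 (pg a3 b3). insert_at 3 (pg a1 b1). rewrite_at 1 3 (peq_sym R1). cancel_at 0.
  rewrite_at 2 3 (peq_winv I4). exact: peq_refl.
Qed.

Lemma commute_conj (a1 b1 a2 b2 : 'I_n) :
  peq [:: pg a1 b1; pg a2 b2] [:: pg a2 b2; pg a1 b1] ->
  peq [:: pg a1 b1; pg a2 b2; pgi a1 b1] [:: pg a2 b2] /\
  peq [:: pgi a1 b1; pg a2 b2; pg a1 b1] [:: pg a2 b2].
Proof.
move=> H; split.
- rewrite_at 0 2 H. cancel_at 1. exact: peq_refl.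
- rewrite_at 1 2 (peq_sym H). cancel_at 0. exact: peq_refl.
Qed.

Section RelationC.
Variables a b c d : 'I_n.
Hypotheses (hab : a < b) (hbc : b < c) (hcd : c < d).
Let C := peq_C hab hbc hcd.

Lemma conj_pac_pbd : peq [:: pg a c; pg b d; pgi a c]
  [:: pgi a b; pg b c; pg a b; pgi b c; pg b d; pg b c; pgi a b; pgi b c; pg a b].
Proof.
have [I1 _ _ _] := cyclic3_conj (cyclic3_rot (cyclic3_A hab hbc)).
insert_at 1 (pg b c). insert_at 4 (pg b c). insert_at 2 (pgi a c). rewrite_at 3 4 C.
rewrite_at 0 3 I1. rewrite_at 6 3 (peq_winv I1). exact: peq_refl.
Qed.

Lemma conjV_pac_pbd : peq [:: pgi a c; pg b d; pg a c]
  [:: pg b c; pg a b; pg b c; pgi a b; pgi b c; pgi b c; pg b d; pg b c;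
      pg b c; pg a b; pgi b c; pgi a b; pgi b c].
Proof.
have [_ _ I3 _] := cyclic3_conj (cyclic3_rot (cyclic3_A hab hbc)).
have CV : peq [:: pgi a c; pgi b c; pg b d; pg b c] [:: pgi b c; pg b d; pg b c; pgi a c].
  insert_at 4 (pg a c). rewrite_at 1 4 (peq_sym C). cancel_at 0. exact: peq_refl.
insert_at 1 (pg b c). insert_at 4 (pg b c). insert_at 2 (pg a c). rewrite_at 3 4 CV.
rewrite_at 0 3 I3. rewrite_at 8 3 (peq_winv I3). exact: peq_refl.
Qed.

Lemma conj_pbd_pac_conj :
  peq [:: pg b d; pg b c; pg a c; pgi b c; pgi b d] [:: pg b c; pg a c; pgi b c].
Proof.
insert_at 0 (pg b c). rewrite_at 1 4 (peq_sym C). cancel_at 4. cancel_at 3. exact: peq_refl.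
Qed.

Lemma conj_pbd_pac : peq [:: pg b d; pg a c; pgi b d]
  [:: pgi b c; pgi c d; pgi b c; pg c d; pg b c; pg b c; pg a c; pgi b c;
      pgi b c; pgi c d; pg b c; pg c d; pg b c].
Proof.
have [_ I2 _ _] := cyclic3_conj (cyclic3_rot (cyclic3_A hbc hcd)).
insert_at 1 (pgi b c). insert_at 4 (pgi b c). insert_at 2 (pgi b d). insert_at 7 (pgi b d).
rewrite_at 3 5 conj_pbd_pac_conj. rewrite_at 6 3 I2. rewrite_at 0 3 (peq_winv I2).
exact: peq_refl.
Qed.

Lemma conjV_pbd_pac : peq [:: pgi b d; pg a c; pg b d]
  [:: pg c d; pgi b c; pgi c d; pg b c; pg a c; pgi b c; pg c d; pg b c; pgi c d].
Proof.
have [_ _ _ I4] := cyclic3_conj (cyclic3_rot (cyclic3_A hbc hcd)).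
have CV : peq [:: pgi b d; pg b c; pg a c; pgi b c; pg b d] [:: pg b c; pg a c; pgi b c].
  rewrite_at 1 3 (peq_sym conj_pbd_pac_conj). cancel_at 0. cancel_at 3. exact: peq_refl.
insert_at 1 (pgi b c). insert_at 4 (pgi b c). insert_at 2 (pg b d). insert_at 7 (pg b d).
rewrite_at 3 5 CV. rewrite_at 6 3 I4. rewrite_at 0 3 (peq_winv I4). exact: peq_refl.
Qed.

End RelationC.
End CyclicRelations.

Definition other_gen n (i j : 'I_n) (x : letter n) : bool :=
  (x.1.1 < x.1.2) && ((x.1.1 != i :> nat) || (x.1.2 != j :> nat)).

(* Q_S for S = N \ {i, j}, i < j: its generators are the p_{a,b} other than p_{i,j}. *)
Definition in_Qij n (i j : 'I_n) (w : word n) : Prop :=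
  exists w' : word n, all (other_gen i j) w' /\ peq w w'.

Ltac in_Qij_by H1 H2 :=
  split; (eexists; split; last (exact H1 || exact H2)); rewrite /other_gen /=; lia.

Lemma conj_pij_gen n (i j a b : 'I_n) :
  i < j -> a < b -> (a != i :> nat) || (b != j :> nat) ->
  in_Qij i j [:: pg i j; pg a b; pgi i j] /\ in_Qij i j [:: pgi i j; pg a b; pg i j].
Proof.
move=> hij hab hne.
have A0 (x y z : 'I_n) (hxy : x < y) (hyz : y < z) :=
  cyclic3_conj (cyclic3_A hxy hyz).
have A1 (x y z : 'I_n) (hxy : x < y) (hyz : y < z) :=
  cyclic3_conj (cyclic3_rot (cyclic3_A hxy hyz)).
have A2 (x y z : 'I_n) (hxy : x < y) (hyz : y < z) :=
  cyclic3_conj (cyclic3_rot (cyclic3_rot (cyclic3_A hxy hyz))).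
case: (ltngtP b i) => [hbi|hib|/ord_inj ebi].
- have [H1 H2] := commute_conj (peq_sym (peq_B1 hab hbi hij)); in_Qij_by H1 H2.
- case: (ltngtP j a) => [hja|haj|/ord_inj eaj].
  + have [H1 H2] := commute_conj (peq_B1 hij hja hab); in_Qij_by H1 H2.
  + case: (ltngtP a i) => [hai|hia|/ord_inj eai].
    * case: (ltngtP b j) => [hbj|hjb|/ord_inj ebj].
      -- have H1 := conj_pbd_pac hai hib hbj; have H2 := conjV_pbd_pac hai hib hbj.
         in_Qij_by H1 H2.
      -- have [H1 H2] := commute_conj (peq_sym (peq_B2 hai hij hjb)); in_Qij_by H1 H2.
      -- subst b; have [_ H1 _ H2] := A2 _ _ _ hai hij; in_Qij_by H1 H2.
    * case: (ltngtP b j) => [hbj|hjb|/ord_inj ebj].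
      -- have [H1 H2] := commute_conj (peq_B2 hia hab hbj); in_Qij_by H1 H2.
      -- have H1 := conj_pac_pbd hia haj hjb; have H2 := conjV_pac_pbd hia haj hjb.
         in_Qij_by H1 H2.
      -- subst b; have [H1 _ H2 _] := A1 _ _ _ hia haj; in_Qij_by H1 H2.
    * subst a; case: (ltngtP b j) => [hbj|hjb|/ord_inj ebj].
      -- have [_ H1 _ H2] := A1 _ _ _ hib hbj; in_Qij_by H1 H2.
      -- have [H1 _ H2 _] := A0 _ _ _ hij hjb; in_Qij_by H1 H2.
      -- by subst b; rewrite !eqxx in hne.
  + subst a; have [_ H1 _ H2] := A0 _ _ _ hij hab; in_Qij_by H1 H2.
- subst b; have [H1 _ H2 _] := A2 _ _ _ hab hij; in_Qij_by H1 H2.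
Qed.

Section NormalClosure.
Variable n : nat.
Variables i j : 'I_n.
Hypothesis hij : i < j.
Implicit Types (u v w q : word n) (x y : letter n).
Local Notation Q := (in_Qij i j).

Lemma in_Qij_peq w v : peq w v -> Q v -> Q w.
Proof. by move=> h [w' [h1 h2]]; exists w'; split=> //; exact: peq_trans h h2. Qed.

Lemma in_Qij_cat u v : Q u -> Q v -> Q (u ++ v).
Proof.
move=> [u' [h1 h2]] [v' [h3 h4]]; exists (u' ++ v').
by split; [rewrite all_cat h1 | exact: peq_cat].
Qed.

Lemma in_Qij_gens w : all (other_gen i j) w -> Q w.
Proof. by move=> h; exists w; split=> //; apply: peq_refl. Qed.

Lemma in_Qij_nil : Q [::].
Proof. exact: in_Qij_gens. Qed.

Lemma in_Qij_winv w : Q w -> Q (winv w).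
Proof.
move=> [w' [h1 h2]]; exists (winv w'); split; last exact: peq_winv.
by rewrite /winv all_rev all_map; apply: sub_all h1.
Qed.

Lemma other_gen_linv x : other_gen i j (linv x) = other_gen i j x.
Proof. by []. Qed.

Lemma other_genN x : valid_letter x -> ~~ other_gen i j x -> x = pg i j \/ x = pgi i j.
Proof.
case: x => [[a b] e]; rewrite /valid_letter /other_gen /= => -> /=; rewrite negb_or !negbK.
by case/andP=> /eqP/ord_inj-> /eqP/ord_inj->; case: e; [right | left].
Qed.

Lemma conj_pij_other_gen x y :
  x = pg i j \/ x = pgi i j -> other_gen i j y -> Q [:: x; y; linv x].
Proof.
case: y => [[a b] e] hx /andP [/= hab hne].
have [h1 h2] := conj_pij_gen hij hab hne.
case: e; case: hx => ->; rewrite //=.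
- exact: (in_Qij_winv h1).
- exact: (in_Qij_winv h2).
Qed.

Lemma in_Qij_conj x q : valid_letter x -> Q q -> Q (x :: q ++ [:: linv x]).
Proof.
move=> hx [q' [hq' hqq']].
apply: (@in_Qij_peq _ (x :: q' ++ [:: linv x])).
  exact: (peq_catl [:: x] (peq_catr _ hqq')).
case hxQ: (other_gen i j x).
  by apply: in_Qij_gens; rewrite /= all_cat hq' /= other_gen_linv hxQ.
have hpij := other_genN hx (negbT hxQ).
elim: q' hq' {hqq'} => [_|y q' IH /andP [hy hq']] /=.
  exact: in_Qij_peq (peq_cancel x) in_Qij_nil.
apply: (@in_Qij_peq _ ([:: x; y; linv x] ++ x :: q' ++ [:: linv x])).
  exact/peq_sym/(peq_cancelV_in [:: x; y] (q' ++ [:: linv x]) [:: x]).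
exact: in_Qij_cat (conj_pij_other_gen hpij hy) (IH hq').
Qed.

Lemma in_Qij_comm_letters x y :
  valid_letter x -> valid_letter y -> Q [:: x; y; linv x; linv y].
Proof.
move=> hx hy; case hyQ: (other_gen i j y).
  apply: (in_Qij_cat (u := [:: x; y; linv x]) (v := [:: linv y])).
    by apply: (in_Qij_conj (q := [:: y])) hx _; apply: in_Qij_gens; rewrite /= hyQ.
  by apply: in_Qij_gens; rewrite /= other_gen_linv hyQ.
case hxQ: (other_gen i j x).
  apply: (in_Qij_cat (u := [:: x]) (v := [:: y; linv x; linv y])).
    by apply: in_Qij_gens; rewrite /= hxQ.
  apply: (in_Qij_conj (q := [:: linv x])) hy _.
  by apply: in_Qij_gens; rewrite /= other_gen_linv hxQ.
apply: in_Qij_peq in_Qij_nil.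
have [->|->] := other_genN hx (negbT hxQ); have [->|->] := other_genN hy (negbT hyQ).
- by cancel_at 1; cancel_at 0; exact: peq_refl.
- by cancel_at 0; cancel_at 0; exact: peq_refl.
- by cancel_at 0; cancel_at 0; exact: peq_refl.
- by cancel_at 1; cancel_at 0; exact: peq_refl.
Qed.

Lemma in_Qij_comm_letter x v : valid_letter x -> valid_word v -> Q (commw ([:: x], v)).
Proof.
move=> hx; elim: v => [_|y v IH /andP [hy hv]].
  exact: in_Qij_peq (peq_cancel x) in_Qij_nil.
apply: in_Qij_peq (commw_cons_r x y v) _.
exact: in_Qij_cat (in_Qij_comm_letters hx hy) (in_Qij_conj hy (IH hv)).
Qed.

Lemma in_Qij_comm u v : valid_word u -> valid_word v -> Q (commw (u, v)).
Proof.
move=> + hv; elim: u => [_|x u IH /andP [hx hu]].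
  exact: in_Qij_peq (peq_cat_winv v) in_Qij_nil.
apply: in_Qij_peq (commw_cons_l x u v) _.
exact: in_Qij_cat (in_Qij_conj hx (IH hu)) (in_Qij_comm_letter hx hv).
Qed.

Lemma in_Qij_inComm w : inComm w -> Q w.
Proof.
case=> s [hs hw]; apply: in_Qij_peq hw _.
elim: s hs => [|[u v] s IH] /=; first by move=> _; exact: in_Qij_nil.
by case/andP=> /andP [hu hv] hs; apply: in_Qij_cat (in_Qij_comm hu hv) (IH hs).
Qed.
End NormalClosure.

Section ExponentSums.
Variable n : nat.
Implicit Types (u v w : word n) (x y : letter n).
Local Open Scope ring_scope.

Definition exponent_sum x w : int := (count_mem x w)%:Z - (count_mem (linv x) w)%:Z.

Lemma exponent_sum_cat x u v : exponent_sum x (u ++ v) = exponent_sum x u + exponent_sum x v.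
Proof. by rewrite /exponent_sum !count_cat; lia. Qed.

Lemma exponent_sum_perm x u v : perm_eq u v -> exponent_sum x u = exponent_sum x v.
Proof. by move=> /permP h; rewrite /exponent_sum !h. Qed.

Lemma exponent_sum_cancel x y : exponent_sum x [:: y; linv y] = 0.
Proof.
rewrite /exponent_sum /= (inj_eq (can_inj (@linvK n))) (can2_eq (@linvK n) (@linvK n)).
by lia.
Qed.

Lemma peq_exponent_sum u v : peq u v -> forall x, exponent_sum x u = exponent_sum x v.
Proof.
elim=> {u v}.
- by [].
- by move=> u v _ IH x; rewrite IH.
- by move=> u v w _ IH1 _ IH2 x; rewrite IH1 IH2.
- by move=> u1 u2 v1 v2 _ IH1 _ IH2 x; rewrite !exponent_sum_cat IH1 IH2.
- by move=> y x; rewrite exponent_sum_cancel.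
- by move=> a b c _ _ x; apply/exponent_sum_perm/permPl/(perm_catC [:: pg a b]).
- by move=> a b c _ _ x; apply/exponent_sum_perm/permPl/(perm_catC [:: pg a c]).
- by move=> a b c d _ _ _ x; apply/exponent_sum_perm/permPl/(perm_catC [:: pg a b]).
- by move=> a b c d _ _ _ x; apply/exponent_sum_perm/permPl/(perm_catC [:: pg a d]).
- by move=> a b c d _ _ _ x; apply/exponent_sum_perm/permPl/(perm_catC [:: pg a c]).
Qed.

Lemma exponent_sum_eq0 x w : (forall y, y \in w -> y.1 != x.1) -> exponent_sum x w = 0.
Proof.
move=> hw; suff cnt0 y : y.1 = x.1 -> count_mem y w = 0%N.
  by rewrite /exponent_sum (cnt0 x) // (cnt0 (linv x)) //; case: x {hw cnt0} => [[]].
by move=> hyx; apply/count_memPn/negP => /hw; rewrite hyx eqxx.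
Qed.

Lemma decomposable_exponent_sum w : valid_word w -> decomposable (n - 2) w ->
  forall x, exponent_sum x w = 0.
Proof.
move=> hw hd [[a b] e]; have [hab|hba] := ltnP a b.
- have cardS : #|~: [set a; b]| = (n - 2)%N.
    by rewrite cardsCs setCK cards2 card_ord; have /negbTE-> : a != b by rewrite -val_eqE /=; lia.
  have [w' [hw' hww']] := hd _ cardS; rewrite (peq_exponent_sum hww').
  apply: exponent_sum_eq0 => y /(allP hw') /andP [_].
  by apply: contraL => /eqP->; rewrite !in_setC !in_set2 !eqxx orbT.
- apply: exponent_sum_eq0 => y /(allP hw); rewrite /valid_letter.
  by apply: contraL => /eqP->; rewrite -leqNgt.
Qed.

Lemma balanced_inComm w : valid_word w -> (forall x, exponent_sum x w = 0) -> inComm w.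
Proof.
have [m] := ubnP (size w); elim: m w => // m IH [|x w] /= hsize.
  by move=> _ _; exists [::]; split=> //; apply: peq_refl.
case/andP=> hx hw hbal.
have hin : linv x \in w.
  have := hbal x; rewrite /exponent_sum /= eqxx.
  have /negbTE-> : x != linv x.
    by case: x {hx hbal} => [[a b] []]; rewrite /linv /= xpair_eqE /= andbF.
  by rewrite add1n add0n -has_pred1 has_count => /eqP; rewrite subr_eq0 => /eqP[<-].
move: hw hsize hbal; case/splitPr: hin => u v.
rewrite /valid_word all_cat /= => /and3P [hu _ hv] hsize hbal.
have [|||s [hs huv]] := IH (u ++ v).
- by move: hsize; rewrite !size_cat /=; lia.
- by rewrite /valid_word all_cat hu hv.
- have hperm : perm_eq (x :: u ++ linv x :: v) ([:: x; linv x] ++ u ++ v).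
    by rewrite /= perm_cons -cat1s perm_catCA.
  move=> y; rewrite -(hbal y) (exponent_sum_perm y hperm).
  by rewrite exponent_sum_cat exponent_sum_cancel add0r.
exists (([:: x], u) :: s); split; first by rewrite /= /valid_word /= hx hu hs.
rewrite (_ : flatten _ = (x :: u ++ [:: linv x]) ++ winv u ++ flatten (map (@commw n) s));
  last by rewrite /= /commw /= -!catA.
rewrite (_ : x :: _ = (x :: u ++ [:: linv x]) ++ v); last by rewrite /= -catA.
apply/peq_catl/peq_sym/(peq_trans (peq_catl _ (peq_sym huv))).
exact: (peq_cancelV_in [::] v u).
Qed.
End ExponentSums.

Lemma setC_pair_of_card n (S : {set 'I_n}) : 2 <= n -> #|S| = n - 2 ->
  exists i j : 'I_n, i < j /\ S = ~: [set i; j].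
Proof.
move=> hn hS; have /cards2P [a [b [hab eS]]] : #|~: S| == 2.
  by have := cardsC S; rewrite card_ord hS => h; apply/eqP; lia.
case: (ltngtP a b) => [hlt|hgt|/ord_inj eab].
- by exists a, b; rewrite -eS setCK.
- by exists b, a; rewrite setUC -eS setCK.
- by rewrite eab eqxx in hab.
Qed.

Lemma in_Qij_inQ n (i j : 'I_n) (w : word n) : i < j -> in_Qij i j w -> inQ (~: [set i; j]) w.
Proof.
move=> hij [w' [hw' hww']]; exists w'; split=> //; apply: sub_all hw' => -[[c d] e].
rewrite /other_gen /valid_letter /= !in_setC !in_set2 -!val_eqE /=.
by case/andP=> hcd hne; rewrite hcd /=; lia.
Qed.

Theorem corollary2p4 (n : nat) (hn : 2 <= n) (w : word n) (hw : valid_word w) :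
  decomposable (n - 2) w <-> inComm w.
Proof.
split=> [hdec | hcomm S hS].
- exact/(balanced_inComm hw)/(decomposable_exponent_sum hw hdec).
- have [i [j [hij ->]]] := setC_pair_of_card hn hS.
  exact/(in_Qij_inQ hij)/(in_Qij_inComm hij hcomm).
Qed.
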